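(* Let $R$ be a ring with unity and involution $*$, and let $a,b,c\in R$ with $a$ left dual $(b,c)$-core invertible. Then for any inner inverse $(cab)^-$ of $cab$ and any $\{1,4\}$-inverse $b^{(1,4)}$ of $b$, the element $b^{(1,4)}b(cab)^-c$ is a left dual $(b,c)$-core inverse of $a$.
   Context: An element $a\in R$ is called left dual $(b,c)$-core invertible if there exists $x\in Rc$ such that $bxab=b$ and $(xab)^*=xab$; such an $x$ is called a left dual $(b,c)$-core inverse of $a$. An inner inverse of $y$ is any $z$ with $yzy=y$. A $\{1,4\}$-inverse of $y$ is any $z$ with $yzy=y$ and $(zy)^*=zy$. *)

From mathcomp Require Import all_boot all_algebra.
Set Implicit Arguments. Unset Strict Implicit. Unset Printing Implicit Defensive.
Import GRing.Theory.
Local Open Scope ring_scope.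

Definition involution (R : pzRingType) (star : R -> R) : Prop :=
  [/\ forall x y : R, star (x + y) = star x + star y,
      forall x y : R, star (x * y) = star y * star x
    & forall x : R, star (star x) = x].

Definition left_dual_bc_core_inverse (R : pzRingType) (star : R -> R)
    (a b c x : R) : Prop :=
  [/\ exists r : R, x = r * c,
      b * x * a * b = b
    & star (x * a * b) = x * a * b].

Definition left_dual_bc_core_invertible (R : pzRingType) (star : R -> R)
    (a b c : R) : Prop :=
  exists x : R, left_dual_bc_core_inverse star a b c x.

Definition inner_inverse (R : pzRingType) (y z : R) : Prop := y * z * y = y.

Definition inverse14 (R : pzRingType) (star : R -> R) (y z : R) : Prop :=
  y * z * y = y /\ star (z * y) = z * y.

From mathcomp Require Import all_boot all_algebra.
Local Open Scope ring_scope.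
Import GRing.Theory.

(* If x = r c is a left dual (b,c)-core inverse of a, then b = (b r)(cab), so b
   lies in the left ideal R(cab) and is therefore fixed by right multiplication
   with g(cab) for any inner inverse g of cab.  Hence the candidate
   x' = b14 b g c satisfies x' a b = b14 b, which is self-adjoint, and
   b x' a b = b b14 b = b.  No property of the involution is needed. *)

Lemma left_dual_bc_core_invertible_factor {R : pzRingType} (star : R -> R)
    (a b c : R) :
  left_dual_bc_core_invertible star a b c -> exists v : R, b = v * (c * a * b).
Proof.
move=> [_ [[r ->] hb _]]; exists (b * r).
by rewrite !mulrA; rewrite !mulrA in hb; rewrite hb.
Qed.

Lemma inner_inverse_rmulK {R : pzRingType} {y z u v : R} :
  inner_inverse y z -> u = v * y -> u * z * y = u.
Proof.
move=> hz ->.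
have -> : v * y * z * y = v * (y * z * y) by rewrite !mulrA.
by rewrite hz.
Qed.

Lemma left_dual_bc_core_inverse_of_factor {R : pzRingType} (star : R -> R)
    (a b c v g b14 : R) :
  b = v * (c * a * b) -> inner_inverse (c * a * b) g -> inverse14 star b b14 ->
  left_dual_bc_core_inverse star a b c (b14 * b * g * c).
Proof.
move=> hb hg [hb1 hb4].
have hbg : b * g * (c * a * b) = b := inner_inverse_rmulK hg hb.
have hxab : b14 * b * g * c * a * b = b14 * b.
  by rewrite -[in RHS]hbg !mulrA.
split.
- by exists (b14 * b * g).
- have -> : b * (b14 * b * g * c) * a * b = b * (b14 * b * g * c * a * b).
    by rewrite !mulrA.
  by rewrite hxab mulrA hb1.
- by rewrite hxab hb4.
Qed.

Theorem proposition2p7 (R : pzRingType) (star : R -> R) (a b c : R) :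
  involution star ->
  left_dual_bc_core_invertible star a b c ->
  forall g b14 : R,
    inner_inverse (c * a * b) g ->
    inverse14 star b b14 ->
    left_dual_bc_core_inverse star a b c (b14 * b * g * c).
Proof.
move=> _ /left_dual_bc_core_invertible_factor [v hb] g b14 hg h14.
exact: left_dual_bc_core_inverse_of_factor hb hg h14.
Qed.
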